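(* Let $A=\langle Q,\delta,\gamma,F\rangle$ be a finitely supported pomset automaton. Then for every $q\in Q$ there exists a pomset automaton $A_q$ with finitely many states and a state $q'$ of $A_q$ such that $L_A(q)=L_{A_q}(q')$.
   Context: Fix a finite alphabet $\Sigma$; pomsets are isomorphism classes of $\Sigma$-labelled posets, $1$ the empty pomset, $a\in\Sigma$ the one-point pomset, $\cdot$ and $\parallel$ sequential and parallel composition, $\mathsf{Pom}^{\mathsf{sp}}$ the smallest set containing $1$ and all $a$ closed under both. A PA is $A=\langle Q,\delta,\gamma,F\rangle$ with $F\subseteq Q$, $\delta:Q\times\Sigma\to Q$, $\gamma:Q^3\to Q$, with states $\bot\notin F$, $\top\in F$ such that $\delta(\bot,a)=\delta(\top,a)=\bot$ and $\gamma(\bot,r,s)=\gamma(\top,r,s)=\bot$. Traces: the smallest relation with $q\xrightarrow{1}_A q$; $q\xrightarrow{a}_A\delta(q,a)$; $q\xrightarrow{U}_A q''\xrightarrow{V}_A q'$ implies $q\xrightarrow{U\cdot V}_A q'$; $r\xrightarrow{U}_A r'\in F$, $s\xrightarrow{V}_A s'\in F$ imply $q\xrightarrow{U\parallel V}_A\gamma(q,r,s)$. $L_A(q)=\{U:\exists q'\in F.\ q\xrightarrow{U}_A q'\}$. The trace dependency relation $\preceq_A$ is the smallest preorder on $Q$ with $r,s\preceq_A q$ whenever $\gamma(q,r,s)\neq\bot$, $\delta(q,a)\preceq_A q$ for all $a$, and $\gamma(q,r,s)\preceq_A q$ for all $r,s$. The support $\pi_A(q)$ is the smallest $\preceq_A$-downward-closed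 subset of $Q$ containing $q$; $A$ is finitely supported if $\pi_A(q)$ is finite for every $q$. *)

From Stdlib Require List.
From mathcomp Require Import all_boot.
Set Implicit Arguments. Unset Strict Implicit. Unset Printing Implicit Defensive.

(* Pomsets are isomorphism classes of these; we work with representatives and
   take all languages up to isomorphism (see [pom_iso] and [PA_lang]). *)
Record lposet (Sigma : Type) := LPoset {
  lp_size : nat;
  lp_ord  : rel 'I_lp_size;
  lp_lab  : 'I_lp_size -> Sigma }.
Arguments lp_size {Sigma} l.
Arguments lp_ord {Sigma} l _ _.
Arguments lp_lab {Sigma} l _.

Definition is_poset {Sigma : Type} (U : lposet Sigma) : Prop :=
  reflexive (lp_ord U) /\ transitive (lp_ord U) /\ antisymmetric (lp_ord U).

Definition pom_iso (Sigma : Type) (U V : lposet Sigma) : Prop :=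
  exists f : 'I_(lp_size U) -> 'I_(lp_size V),
    bijective f /\
    (forall x y, lp_ord V (f x) (f y) = lp_ord U x y) /\
    (forall x, lp_lab V (f x) = lp_lab U x).

Lemma ord0_empty : 'I_0 -> False. Proof. by case. Qed.

Definition pom_one (Sigma : Type) : lposet Sigma :=
  @LPoset Sigma 0 (fun _ _ => true) (fun i => False_rect _ (ord0_empty i)).

Definition pom_letter (Sigma : Type) (a : Sigma) : lposet Sigma :=
  @LPoset Sigma 1 (fun _ _ => true) (fun _ => a).

Definition sum_lab {Sigma : Type} (U V : lposet Sigma)
  (x : 'I_(lp_size U + lp_size V)) : Sigma :=
  match split x with inl i => lp_lab U i | inr j => lp_lab V j end.

Arguments sum_lab {Sigma} U V x.

Definition pom_seq (Sigma : Type) (U V : lposet Sigma) : lposet Sigma :=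
  @LPoset Sigma (lp_size U + lp_size V)
    (fun x y => match split x, split y with
                | inl i, inl j => lp_ord U i j
                | inr i, inr j => lp_ord V i j
                | inl _, inr _ => true
                | inr _, inl _ => false end)
    (sum_lab U V).

Definition pom_par (Sigma : Type) (U V : lposet Sigma) : lposet Sigma :=
  @LPoset Sigma (lp_size U + lp_size V)
    (fun x y => match split x, split y with
                | inl i, inl j => lp_ord U i j
                | inr i, inr j => lp_ord V i j
                | _, _ => false end)
    (sum_lab U V).

Record PA (Sigma : Type) (Q : Type) := MkPA {
  pa_delta : Q -> Sigma -> Q;
  pa_gamma : Q -> Q -> Q -> Q;
  pa_F     : Q -> Prop;
  pa_bot   : Q;
  pa_top   : Q;
  pa_bot_notF : ~ pa_F pa_bot;
  pa_top_F    : pa_F pa_top;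
  pa_delta_bot : forall a, pa_delta pa_bot a = pa_bot;
  pa_delta_top : forall a, pa_delta pa_top a = pa_bot;
  pa_gamma_bot : forall r s, pa_gamma pa_bot r s = pa_bot;
  pa_gamma_top : forall r s, pa_gamma pa_top r s = pa_bot }.

Inductive PA_trace (Sigma Q : Type) (A : PA Sigma Q) :
    Q -> lposet Sigma -> Q -> Prop :=
  | tr_one q : PA_trace A q (pom_one Sigma) q
  | tr_letter q a : PA_trace A q (pom_letter a) (pa_delta A q a)
  | tr_seq q q'' q' U V :
      PA_trace A q U q'' -> PA_trace A q'' V q' ->
      PA_trace A q (pom_seq U V) q'
  | tr_par q r r' s s' U V :
      PA_trace A r U r' -> pa_F A r' ->
      PA_trace A s V s' -> pa_F A s' ->
      PA_trace A q (pom_par U V) (pa_gamma A q r s).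

Definition PA_lang (Sigma Q : Type) (A : PA Sigma Q) (q : Q)
    (U : lposet Sigma) : Prop :=
  exists (U' : lposet Sigma) (q' : Q),
    pa_F A q' /\ PA_trace A q U' q' /\ pom_iso U' U.

(* trace dependency relation: the smallest preorder with the given generators;
   [PA_dep A p q] means p <=_A q *)
Inductive PA_dep (Sigma Q : Type) (A : PA Sigma Q) : Q -> Q -> Prop :=
  | dep_refl q : PA_dep A q q
  | dep_trans p q r : PA_dep A p q -> PA_dep A q r -> PA_dep A p r
  | dep_gamma_l q r s : pa_gamma A q r s <> pa_bot A -> PA_dep A r q
  | dep_gamma_r q r s : pa_gamma A q r s <> pa_bot A -> PA_dep A s q
  | dep_delta q a : PA_dep A (pa_delta A q a) q
  | dep_gamma q r s : PA_dep A (pa_gamma A q r s) q.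

(* support pi_A(q): smallest <=_A-downward-closed set containing q *)
Definition PA_support (Sigma Q : Type) (A : PA Sigma Q) (q : Q) : Q -> Prop :=
  fun p => PA_dep A p q.

Definition finite_set (Q : Type) (S : Q -> Prop) : Prop :=
  exists l : list Q, forall p, S p -> List.In p l.

Definition finitely_supported (Sigma Q : Type) (A : PA Sigma Q) : Prop :=
  forall q, finite_set (PA_support A q).

(** Let D be the support of q together with bot and top.  D is finite and
    downward closed for the trace dependency relation, so the transitions of A
    map D into D, and a parallel step out of D can only start its branches
    outside D when its target is bot, from which nothing is accepted.  Hence
    reading A on D alone, with D indexed by a finite ordinal through a
    section-retraction pair, accepts the same pomsets from q. *)

From mathcomp Require Import all_boot.
From Stdlib Require Import Classical ClassicalEpsilon.
Set Implicit Arguments. Unset Strict Implicit.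

Lemma finite_set_enum (T : Type) (S : T -> Prop) :
  finite_set S -> exists l : list T, forall p, S p <-> List.In p l.
Proof.
move=> [l Sl].
suff [l' Hl'] : exists l' : list T, forall p, S p /\ List.In p l <-> List.In p l'.
  by exists l' => p; split=> [Sp | /Hl' []//]; apply/Hl'; split=> //; exact: Sl.
elim: l {Sl} => [|x l [l' IH]]; first by exists [::] => p; split=> [[]|].
case: (classic (S x)) => Sx; [exists (x :: l') | exists l'] => p /=.
- split=> [[Sp [<-|/(conj Sp)/IH]]|[<-|/IH[Sp lp]]]; by auto.
- split=> [[Sp [xp|/(conj Sp)/IH//]]|/IH[Sp lp]]; last by auto.
  by rewrite xp in Sx.
Qed.

Lemma finite_set_retract (T : Type) (S : T -> Prop) (x0 : T) :
  finite_set S -> S x0 ->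
  exists n (emb : 'I_n -> T) (ret : T -> 'I_n),
    (forall i, S (emb i)) /\ (forall p, S p -> emb (ret p) = p).
Proof.
move=> /finite_set_enum [l Sl] Sx0.
have inh : inhabited 'I_(List.length l).
  by case: l Sl => [|y l] Sl; [case: ((Sl x0).1 Sx0) | exact: inhabits ord0].
exists (List.length l), (fun i => List.nth i l x0),
  (fun p => epsilon inh (fun i : 'I_(List.length l) => List.nth i l x0 = p)).
split=> [i | p /Sl /(List.In_nth _ _ x0) [k [/ltP lt_k_l <-]]].
  by apply/Sl; apply: List.nth_In; apply/ltP.
by apply: (epsilon_spec inh (fun i : 'I_(List.length l) => List.nth i l x0 = _));
  exists (Ordinal lt_k_l).
Qed.

Section Traces.

Variables (Sigma Q : Type) (A : PA Sigma Q).

Lemma PA_final_not_bot p : pa_F A p -> p <> pa_bot A.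
Proof. by move=> Fp p_bot; apply: (@pa_bot_notF _ _ A); rewrite -p_bot. Qed.

Lemma PA_trace_from_bot p U p' : PA_trace A p U p' -> p = pa_bot A -> p' = pa_bot A.
Proof.
elim=> // [q a -> | q q'' q' U1 V1 _ IH1 _ IH2 /IH1/IH2 //
           | q r r' s s' U1 V1 _ _ _ _ _ _ ->].
- exact: pa_delta_bot.
- exact: pa_gamma_bot.
Qed.

Lemma PA_dep_bot_top p p' :
  PA_dep A p p' -> p' = pa_bot A \/ p' = pa_top A -> p = pa_bot A \/ p = pa_top A.
Proof.
elim=> // {p p'} [p q r _ IHpq _ IHqr /IHqr/IHpq// | q r s | q r s | q a | q r s].
- by move=> nbot [] q_bt; rewrite q_bt ?pa_gamma_bot ?pa_gamma_top in nbot.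
- by move=> nbot [] q_bt; rewrite q_bt ?pa_gamma_bot ?pa_gamma_top in nbot.
- by case=> ->; rewrite ?pa_delta_bot ?pa_delta_top; left.
- by case=> ->; rewrite ?pa_gamma_bot ?pa_gamma_top; left.
Qed.

Definition PA_downclosed (D : Q -> Prop) := forall p p', PA_dep A p p' -> D p' -> D p.

Definition PA_support_bot_top (q : Q) (p : Q) : Prop :=
  p = pa_bot A \/ p = pa_top A \/ PA_support A q p.

Lemma PA_support_bot_top_downclosed q : PA_downclosed (PA_support_bot_top q).
Proof.
move=> p p' dep_pp' [|[]] Dp'.
- by case: (PA_dep_bot_top dep_pp' (or_introl Dp')) => ->; [left | right; left].
- by case: (PA_dep_bot_top dep_pp' (or_intror Dp')) => ->; [left | right; left].
- by right; right; exact: dep_trans dep_pp' Dp'.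
Qed.

Lemma PA_support_bot_top_finite q :
  finitely_supported A -> finite_set (PA_support_bot_top q).
Proof.
move=> /(_ q) [l Hl]; exists [:: pa_bot A, pa_top A & l] => p.
by case=> [->|[->|/Hl]]; rewrite /=; auto.
Qed.

End Traces.

Section Restriction.

Variables (Sigma Q T : Type) (A : PA Sigma Q) (D : Q -> Prop).
Variables (emb : T -> Q) (ret : Q -> T).
Hypotheses (D_bot : D (pa_bot A)) (D_top : D (pa_top A)) (D_down : PA_downclosed A D).
Hypotheses (D_emb : forall x, D (emb x)) (retK : forall p, D p -> emb (ret p) = p).

Definition restrict_PA : PA Sigma T.
Proof.
refine (@MkPA Sigma T
  (fun x a => ret (pa_delta A (emb x) a))
  (fun x y z => ret (pa_gamma A (emb x) (emb y) (emb z)))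
  (fun x => pa_F A (emb x)) (ret (pa_bot A)) (ret (pa_top A)) _ _ _ _ _ _);
  rewrite /= ?retK //.
- exact: pa_bot_notF.
- exact: pa_top_F.
- by move=> a; rewrite pa_delta_bot.
- by move=> a; rewrite pa_delta_top.
- by move=> r s; rewrite pa_gamma_bot.
- by move=> r s; rewrite pa_gamma_top.
Defined.

Lemma downclosed_delta p a : D p -> D (pa_delta A p a).
Proof. exact: D_down (dep_delta A p a). Qed.

Lemma downclosed_gamma p r s : D p -> D (pa_gamma A p r s).
Proof. exact: D_down (dep_gamma A p r s). Qed.

Lemma downclosed_trace p U p' : PA_trace A p U p' -> D p -> D p'.
Proof.
elim=> // [q a | q q'' q' U1 V1 _ IH1 _ IH2 /IH1/IH2 // | q r r' s s' *].
- exact: downclosed_delta.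
- exact: downclosed_gamma.
Qed.

Lemma restrict_trace_sound x U x' :
  PA_trace restrict_PA x U x' -> PA_trace A (emb x) U (emb x').
Proof.
elim=> /= [y | y a | y y'' y' U1 V1 _ T1 _ T2 | y r r' s s' U1 V1 _ T1 F1 _ T2 F2].
- exact: tr_one.
- by rewrite retK; [exact: tr_letter | apply/downclosed_delta/D_emb].
- exact: tr_seq T1 T2.
- by rewrite retK; [exact: tr_par _ T1 F1 T2 F2 | apply/downclosed_gamma/D_emb].
Qed.

Lemma restrict_final p : D p -> pa_F restrict_PA (ret p) <-> pa_F A p.
Proof. by move=> Dp /=; rewrite retK. Qed.

Lemma restrict_trace_complete p U p' :
  PA_trace A p U p' -> D p ->
  p' = pa_bot A \/ PA_trace restrict_PA (ret p) U (ret p').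
Proof.
elim=> {p U p'} [q | q a | q q'' q' U1 V1 T1 IH1 T2 IH2
                  | q r r' s s' U1 V1 T1 IH1 F1 T2 IH2 F2] Dq.
- by right; exact: tr_one.
- by right; have := tr_letter restrict_PA (ret q) a; rewrite /= retK.
- case: (IH1 Dq) => [q''_bot | T1']; first by left; exact: PA_trace_from_bot T2 q''_bot.
  case: (IH2 (downclosed_trace T1 Dq)) => [|T2']; first by left.
  by right; exact: tr_seq T1' T2'.
- case: (classic (pa_gamma A q r s = pa_bot A)) => [|nbot]; first by left.
  have Dr : D r by exact: D_down (dep_gamma_l nbot) Dq.
  have Ds : D s by exact: D_down (dep_gamma_r nbot) Dq.
  case: (IH1 Dr) => [/(PA_final_not_bot F1)// | T1'].
  case: (IH2 Ds) => [/(PA_final_not_bot F2)// | T2'].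
  right; have := tr_par (ret q) T1' ((restrict_final (downclosed_trace T1 Dr)).2 F1)
                                  T2' ((restrict_final (downclosed_trace T2 Ds)).2 F2).
  by rewrite /= !retK.
Qed.

Lemma restrict_lang p U : D p -> PA_lang A p U <-> PA_lang restrict_PA (ret p) U.
Proof.
move=> Dp; split=> [[U' [p' [Fp' [Tp Iso]]]] | [U' [x' [Fx' [Tx Iso]]]]].
- case: (restrict_trace_complete Tp Dp) => [/(PA_final_not_bot Fp')// | Tx].
  have Dp' := downclosed_trace Tp Dp.
  by exists U', (ret p'); split; first exact/(restrict_final Dp').
- have := restrict_trace_sound Tx; rewrite retK // => Tx'.
  by exists U', (emb x').
Qed.

End Restriction.

Theorem mainTheorem6 (Sigma : finType) (Q : Type) (A : PA Sigma Q) :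
  finitely_supported A ->
  forall q : Q,
    exists (Q' : finType) (Aq : PA Sigma Q') (q' : Q'),
      forall U : lposet Sigma, PA_lang A q U <-> PA_lang Aq q' U.
Proof.
move=> fin_A q; set D := PA_support_bot_top A q.
have D_bot : D (pa_bot A) by left.
have D_top : D (pa_top A) by right; left.
have D_q : D q by right; right; exact: dep_refl.
have [n [emb [ret [D_emb retK]]]] :=
  finite_set_retract (PA_support_bot_top_finite q fin_A) D_bot.
exists 'I_n, (restrict_PA D_bot D_top retK), (ret q) => U.
apply: restrict_lang D_q; [exact: PA_support_bot_top_downclosed | exact: D_emb].
Qed.
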